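(* Let $f:V_n^{(p)}\to\mathbb{F}_p$ be an $s$-plateaued function with dual $f^*$. If $f(0)=0$ and $f(x)=f(-x)$ for all $x\in V_n^{(p)}$, then $f^*(0)=0$.
   Context: Let $p$ be an odd prime, $V_n^{(p)}$ an $n$-dimensional $\mathbb{F}_p$-vector space with a non-degenerate symmetric bilinear form $\langle\cdot,\cdot\rangle_n$, $\xi_p=e^{2\pi\sqrt{-1}/p}$. For $f:V_n^{(p)}\to\mathbb{F}_p$, $\widehat{\chi_f}(\alpha)=\sum_x\xi_p^{f(x)-\langle\alpha,x\rangle_n}$; $f$ is $s$-plateaued ($0\le s\le n$) if $|\widehat{\chi_f}(\alpha)|\in\{0,p^{(n+s)/2}\}$ for all $\alpha$, with $\mathrm{Supp}(\widehat{\chi_f})$ the set where $p^{(n+s)/2}$ is attained. Let $\mu=1$ if $p^{n+s}\equiv1\pmod4$, else $\mu=\sqrt{-1}$. For $\alpha\in\mathrm{Supp}(\widehat{\chi_f})$, $\widehat{\chi_f}(\alpha)=\epsilon_\alpha\mu p^{(n+s)/2}\xi_p^{f^*(\alpha)}$ with unique $\epsilon_\alpha\in\{\pm1\}$ and $f^*(\alpha)\in\mathbb{F}_p$; $f^*:\mathrm{Supp}(\widehat{\chi_f})\to\mathbb{F}_p$ is the dual of $f$. *)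

From HB Require Import structures.
From mathcomp Require Import all_boot all_order all_algebra all_field.
Set Implicit Arguments. Unset Strict Implicit. Unset Printing Implicit Defensive.
Import Order.TTheory GRing.Theory Num.Theory.
Local Open Scope ring_scope.

(* V_n^(p) is modelled as 'rV['F_p]_n; the bilinear form is
   <a, x> = a B x^T for a symmetric invertible matrix B. *)
Definition bform (p n : nat) (B : 'M['F_p]_n) (a x : 'rV['F_p]_n) : 'F_p :=
  (a *m B *m x^T) 0 0.

(* xi_p = e^{2 pi i / p}: n.-root (-1) is e^{i pi / n} in algC. *)
Definition xi (p : nat) : algC := (p.-root (-1)) ^+ 2.

Definition xiF (p : nat) (c : 'F_p) : algC := xi p ^+ (nat_of_ord c).

Definition walsh (p n : nat) (B : 'M['F_p]_n) (f : 'rV['F_p]_n -> 'F_p)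
  (alpha : 'rV['F_p]_n) : algC :=
  \sum_(x : 'rV['F_p]_n) xiF (f x - bform B alpha x).

Definition plat_amp (p n s : nat) : algC := sqrtC (p%:R) ^+ (n + s).

Definition plateaued (p n s : nat) (B : 'M['F_p]_n) (f : 'rV['F_p]_n -> 'F_p) :=
  (s <= n)%N /\
  forall alpha, `|walsh B f alpha| = 0 \/ `|walsh B f alpha| = plat_amp p n s.

Definition in_supp (p n s : nat) (B : 'M['F_p]_n) (f : 'rV['F_p]_n -> 'F_p) alpha :=
  `|walsh B f alpha| = plat_amp p n s.

Definition mu (p n s : nat) : algC :=
  if (p ^ (n + s) %% 4 == 1)%N then 1 else 'i.

(* f^*(alpha) = c  iff alpha in Supp and chi^(alpha) = eps mu p^{(n+s)/2} xi^c
   for some sign eps (f^*(alpha) is the unique such c). *)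
Definition dual_is (p n s : nat) (B : 'M['F_p]_n) (f : 'rV['F_p]_n -> 'F_p)
  (alpha : 'rV['F_p]_n) (c : 'F_p) : Prop :=
  in_supp s B f alpha /\
  exists e : bool, walsh B f alpha = (-1) ^+ e * mu p n s * plat_amp p n s * xiF c.

(* Work modulo 2 in the ring of algebraic integers.  As f is even and x <> -x
   for x <> 0 (p is odd), the Walsh sum at 0 pairs up into
   chi_f^(0) = xi^(f 0) + 2 a = 1 + 2 a with a an algebraic integer; hence
   chi_f^(0) <> 0, i.e. 0 is in the support.  The fourth power of
   chi_f^(0) = +-mu p^((n+s)/2) xi^(f^*(0)) kills the sign and mu, so
   1 = chi_f^(0)^4 = p^(2(n+s)) zeta = zeta (mod 2) with zeta = xi^(4 f^*(0)).
   If f^*(0) <> 0, zeta is a primitive p-th root of unity and then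
   p = prod_(0 < k < p) (1 - zeta^k) = 0 (mod 2), which is absurd for odd p. *)

From HB Require Import structures.
From mathcomp Require Import all_boot all_order all_algebra all_field.
Import Order.TTheory GRing.Theory Num.Theory.
Local Open Scope ring_scope.

Lemma eqAmodX {e x y : algC} (k : nat) : x \in Aint -> y \in Aint ->
  (x == y %[mod e])%A -> (x ^+ k == y ^+ k %[mod e])%A.
Proof.
move=> Ax Ay xy; elim: k => [|k IHk]; first by rewrite !expr0.
by rewrite !exprS eqAmodM ?rpredX.
Qed.

Lemma one_neq0_mod2 : (1 != 0 %[mod 2])%A.
Proof. by rewrite (eqAmod0_nat 2 1). Qed.

Lemma odd_natr_eq1_mod2 (m : nat) : odd m -> (m%:R == 1 %[mod 2])%A.
Proof. by move=> m_odd; apply: etrans (eqAmod_nat 2 m 1) _; rewrite modn2 m_odd. Qed.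

Lemma prod_1_sub_prim_root (p : nat) (z : algC) : p.-primitive_root z ->
  \prod_(1 <= k < p) (1 - z ^+ k) = p%:R.
Proof.
move=> z_prim; have p_gt0 := prim_order_gt0 z_prim.
have := factor_Xn_sub_1 z_prim; rewrite big_ltn // expr0 subrX1.
move/(mulfI (monic_neq0 (monicXsubC 1))) => /(congr1 (horner^~ 1)).
rewrite horner_prod horner_sum /=.
under eq_bigr do rewrite hornerXsubC.
under [X in _ = X -> _]eq_bigr do rewrite hornerXn expr1n.
by rewrite sumr_const card_ord.
Qed.

Lemma prim_root_neq1_mod2 {p : nat} {z : algC} : (1 < p)%N -> odd p ->
  p.-primitive_root z -> (z != 1 %[mod 2])%A.
Proof.
move=> p_gt1 p_odd z_prim; apply/negP => z1.
have Az k : z ^+ k \in Aint by rewrite rpredX ?(Aint_prim_root z_prim).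
have : (p%:R == 0 %[mod 2])%A.
  rewrite -(prod_1_sub_prim_root _ _ z_prim) big_ltn // expr1.
  rewrite -[X in (_ == X %[mod _])%A](mul0r (\prod_(2 <= k < p) (1 - z ^+ k))).
  apply: eqAmodMr; first by rewrite rpred_prod // => k _; rewrite rpredB ?Aint1.
  by rewrite -(subrr 1) eqAmodDl eqAmodN !opprK.
by move=> p_even; have := eqAmod0_nat 2 p; rewrite p_even dvdn2 p_odd.
Qed.

Lemma Re_ge1_normC1_eq1 (w : algC) : `|w| = 1 -> 1 <= 'Re w -> w = 1.
Proof.
move=> w1 Rew; have [Re_le_norm /esym] := leif_Re_Creal w.
rewrite eq_le Re_le_norm w1 Rew => /ger0_norm.
by rewrite w1.
Qed.

Lemma rootCN1_neqN1 (p : nat) : (1 < p)%N -> odd p -> p.-root (-1 : algC) != -1.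
Proof.
move=> p_gt1 p_odd; have p_gt0 := ltnW p_gt1.
have [w w_prim] := C_prim_root_exists p_gt0.
wlog Im_w : w w_prim / 'Im w <= 0.
  move=> IH; have [|/ltW Im_gt0] := real_leP (Creal_Im w) (real0 _).
    exact: IH.
  by apply: (IH w^*); rewrite ?fmorph_primitive_root // Im_conj oppr_le0.
(* -w is a p-th root of -1 in the upper half plane, and p.-root (-1) is the
   one of largest real part among those. *)
apply/eqP => rootN1.
have Nwp : (- w) ^+ p = -1.
  by rewrite exprNn (prim_expr_order w_prim) mulr1 -signr_odd p_odd.
have := rootC_Re_max p_gt0 Nwp; rewrite rootN1 !raddfN /= oppr_ge0 => /(_ Im_w).
rewrite (Creal_ReP 1 _) ?rpred1 // lerN2 => Re_w.
have w_norm : `|w| = 1.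
  by apply/eqP; rewrite -(pexpr_eq1 p_gt0) // -normrX (prim_expr_order w_prim) normr1.
have := prim_order_dvd w_prim 1; rewrite (Re_ge1_normC1_eq1 _ w_norm Re_w) expr1 eqxx.
by rewrite dvdn1 (gtn_eqF p_gt1).
Qed.

Lemma oppr_fix_eq0 (F : fieldType) (V : lmodType F) (x : V) :
  (2%:R : F) != 0 -> x = - x -> x = 0.
Proof.
move=> two_neq0 x_fix; apply/eqP.
have := scaler_eq0 (2%:R : F) x; rewrite (negbTE two_neq0) /= => <-.
by rewrite scaler_nat mulr2n {1}x_fix addNr.
Qed.

(* The filter keeps exactly one element of each pair {x, -x} with x <> 0. *)
Lemma sumr_even {V : finZmodType} {M : nmodType} (g : V -> M) :
  (forall x : V, x = - x -> x = 0) -> (forall x, g (- x) = g x) ->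
  \sum_x g x = g 0 + (\sum_(x | (enum_rank x < enum_rank (- x))%N) g x) *+ 2.
Proof.
move=> oppr_fix g_even; rewrite (bigD1 0) //=; congr (_ + _).
rewrite (bigID (fun x => (enum_rank x < enum_rank (- x))%N)) /= mulr2n.
congr (_ + _).
  by apply: eq_bigl => x; case: eqP => [->|_] /=; rewrite ?oppr0 ?ltnn.
rewrite [RHS](reindex_inj oppr_inj) /=; apply: eq_big => [x|x _]; last by rewrite g_even.
rewrite opprK -leqNgt leq_eqVlt (inj_eq val_inj) (inj_eq enum_rank_inj).
case: (eqVneq x 0) => [->|x_neq0] /=; first by rewrite oppr0 ltnn.
suff -> : (- x == x) = false by [].
by apply: contraNF x_neq0 => /eqP/esym/oppr_fix ->.
Qed.

Section OddPrimeField.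

Context {p : nat}.
Hypotheses (p_prime : prime p) (p_odd : odd p).

Lemma xi_prim_root : p.-primitive_root (xi p).
Proof.
have p_gt1 := prime_gt1 p_prime; have p_gt0 := ltnW p_gt1.
have rootN1_p : p.-root (-1 : algC) ^+ p = -1 by rewrite rootCK.
have xi_p : xi p ^+ p = 1 by rewrite /xi -exprM mulnC exprM rootN1_p sqrrN expr1n.
have xi_neq1 : xi p != 1.
  rewrite /xi sqrf_eq1 negb_or rootCN1_neqN1 // andbT.
  by apply/eqP => root1; move/eqP: rootN1_p; rewrite root1 expr1n eq_sym eqNr oner_eq0.
have [m m_prim m_dvd_p] := prim_order_exists p_gt0 xi_p.
case/primeP: p_prime => _ /(_ m m_dvd_p) /pred2P [m1|m_eq_p].
  by move: (prim_order_dvd m_prim 1); rewrite m1 dvdnn expr1 (negbTE xi_neq1).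
by rewrite m_eq_p in m_prim.
Qed.

Lemma xiF_prim_root (c : 'F_p) : c != 0 -> p.-primitive_root (xiF c).
Proof.
move=> c_neq0; rewrite /xiF prim_root_exp_coprime ?xi_prim_root //.
rewrite coprime_sym prime_coprime // gtnNdvd ?lt0n //.
by rewrite -[p in (_ < p)%N](Fp_cast p_prime) ltn_ord.
Qed.

Lemma Aint_xiF (c : 'F_p) : xiF c \in Aint.
Proof. by rewrite rpredX ?(Aint_prim_root xi_prim_root). Qed.

Lemma Aint_walsh {n} (B : 'M['F_p]_n) (f : 'rV['F_p]_n -> 'F_p) alpha :
  walsh B f alpha \in Aint.
Proof. by rewrite rpred_sum // => x _; apply: Aint_xiF. Qed.

Lemma rV_Fp_oppr_fix_eq0 {n} (x : 'rV['F_p]_n) : x = - x -> x = 0.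
Proof.
apply: oppr_fix_eq0; rewrite -(dvdn_pcharf (pchar_Fp p_prime)).
by rewrite dvdn_prime2 //; apply: contraTneq p_odd => ->.
Qed.

Lemma walsh0_eqmod2 {n} (B : 'M['F_p]_n) (f : 'rV['F_p]_n -> 'F_p) :
  (forall x, f x = f (- x)) -> (walsh B f 0 == xiF (f 0) %[mod 2])%A.
Proof.
move=> f_even; rewrite /walsh; under eq_bigr do rewrite /bform !mul0mx mxE subr0.
rewrite (sumr_even _ rV_Fp_oppr_fix_eq0) => [|x]; last by rewrite -f_even.
set S := \sum_(x | _) _.
have AS : S \in Aint by rewrite rpred_sum // => x _; apply: Aint_xiF.
by rewrite -[X in (_ == X %[mod _])%A]addr0 eqAmodDl -(mulr_natl S 2) eqAmodMr0.
Qed.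

End OddPrimeField.

Lemma dual_is_walshX4 p n s (B : 'M['F_p]_n) (f : 'rV['F_p]_n -> 'F_p) alpha c :
  dual_is s B f alpha c -> walsh B f alpha ^+ 4 = ((p ^ (n + s)) ^ 2)%:R * xiF c ^+ 4.
Proof.
have mu4 : mu p n s ^+ 4 = 1.
  by rewrite /mu; case: ifP => _; rewrite ?expr1n // (exprM _ 2 2) sqrCi sqrrN expr1n.
have amp4 : plat_amp p n s ^+ 4 = ((p ^ (n + s)) ^ 2)%:R.
  by rewrite /plat_amp (exprM _ 2 2) exprAC sqrtCK !natrX.
case=> _ [e ->]; rewrite !exprMn mu4 amp4 (exprM _ 2 2) sqrr_sign expr1n.
by rewrite !mul1r.
Qed.

Theorem lemma7 (p n s : nat) (B : 'M['F_p]_n) (f : 'rV['F_p]_n -> 'F_p) :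
  prime p -> odd p ->
  B^T = B -> B \in unitmx ->
  plateaued s B f ->
  f 0 = 0 -> (forall x, f x = f (- x)) ->
  in_supp s B f 0 /\
  (forall c : 'F_p, dual_is s B f 0 c -> c = 0).
Proof.
move=> p_prime p_odd _ _ [_ plateau] f0 f_even.
have W_odd : (walsh B f 0 == 1 %[mod 2])%A.
  by have := walsh0_eqmod2 p_prime p_odd B f f_even; rewrite f0 /xiF expr0.
split.
  case: (plateau 0) => // /normr0_eq0 W0.
  by move: W_odd; rewrite W0 eqAmod_sym (negbTE one_neq0_mod2).
move=> c /dual_is_walshX4 W4; case: (eqVneq c 0) => // c_neq0; exfalso.
set z := xiF c ^+ 4.
have z_prim : p.-primitive_root z.
  by rewrite prim_root_exp_coprime ?xiF_prim_root // (@coprime_pexpl 2 2 p) // coprime2n.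
apply: (negP (prim_root_neq1_mod2 (prime_gt1 p_prime) p_odd z_prim)).
have Nz_eq_z : (((p ^ (n + s)) ^ 2)%:R * z == z %[mod 2])%A.
  rewrite -[X in (_ == X %[mod _])%A]mul1r eqAmodMr ?(Aint_prim_root z_prim) //.
  by rewrite odd_natr_eq1_mod2 // !oddX p_odd orbT.
rewrite -(eqAmod_transl _ Nz_eq_z) -W4.
by have := eqAmodX 4 (Aint_walsh p_prime p_odd B f 0) Aint1 W_odd; rewrite expr1n.
Qed.
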